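(* Let $p$ be a prime, and let $K=\{k_1<k_2<\cdots<k_r\}$ and $L=\{l_1,\ldots,l_s\}$ be disjoint subsets of $\{0,1,\ldots,p-1\}$. Let $\mathcal{A}$ be a family of distinct subsets of $[n]$ with $|A|\pmod p\in K$ for all $A\in\mathcal{A}$ and $|A\cap B|\pmod p\in L$ for all distinct $A,B\in\mathcal{A}$. Suppose that $s+k_r\le n\le 2s-2r$ and $p+k_1-1\le (s-2r+1)+k_r$. Then \[ |\mathcal{A}|\le r\binom{n}{s}\le \binom{n}{s}+\binom{n}{s-2}+\cdots+\binom{n}{s-2r+2}=\binom{n-1}{s}+\binom{n-1}{s-1}+\cdots+\binom{n-1}{s-2r+1}. \] *)

From mathcomp Require Import all_boot.
Set Implicit Arguments. Unset Strict Implicit. Unset Printing Implicit Defensive.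

(* A set of F whose size is k mod p, for k in K, has size k or k + p, because
   n < k + 2p.  No k-set of F lies inside a (k + p)-set of F: their
   intersection would have size k mod p, which is in K but must be in L.  By
   the normalized matching property of the Boolean lattice such a two-level
   antichain has at most max (C(n,k), C(n,k+p)) <= C(n,s) members, and summing
   over the r residues in K gives |F| <= r C(n,s).  The other two claims are
   unimodality of the binomial coefficients and Pascal's rule. *)
From mathcomp Require Import all_boot zify.
Set Implicit Arguments. Unset Strict Implicit. Unset Printing Implicit Defensive.

Lemma leq_bin_half n a b : a <= b -> b.*2 <= n -> 'C(n, a) <= 'C(n, b).
Proof.
elim: b => [|b IH]; first by rewrite leqn0 => /eqP->.
rewrite leq_eqVlt ltnS => /orP[/eqP-> //| ab] bn.
apply: leq_trans (IH ab _) _; first by lia.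
by rewrite -(leq_pmul2l (ltn0Sn b)) mul_bin_left leq_mul2r; apply/orP; right; lia.
Qed.

Lemma leq_bin_mid n a b : a <= b -> b <= n - a -> 'C(n, a) <= 'C(n, b).
Proof.
move=> ab ban; have [bn | nb] := leqP b.*2 n; first exact: leq_bin_half.
by rewrite -(@bin_sub n b) //; [apply: leq_bin_half | ]; lia.
Qed.

Lemma sum_bin_skip2 n s t : 0 < n -> t.*2 <= s ->
  \sum_(i < t) 'C(n, s - 2 * i) = \sum_(j < 2 * t) 'C(n.-1, s - j).
Proof.
case: n => [//|n] _ /=; elim: t => [|t IH] ts; first by rewrite !big_ord0.
rewrite (_ : 2 * t.+1 = (2 * t).+2) ?big_ord_recr //= ?IH -?addnA; try lia.
by rewrite (_ : s - 2 * t = (s - (2 * t).+1).+1) ?binS //; lia.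
Qed.

Lemma mul_bin_subset n k m : k <= m ->
  'C(n, k) * 'C(n - k, m - k) = 'C(n, m) * 'C(m, k).
Proof.
move=> km; have [mn | nm] := leqP m n; last first.
  rewrite (bin_small nm); have [nk | kn] := ltnP n k; first by rewrite bin_small.
  by rewrite (@bin_small (n - k)) ?muln0; lia.
have facts_gt0 : 0 < k`! * (m - k)`! * (n - m)`! by rewrite !muln_gt0 !fact_gt0.
apply/eqP; rewrite -(eqn_pmul2r facts_gt0); apply/eqP.
have nk_mk : 'C(n - k, m - k) * ((m - k)`! * (n - m)`!) = (n - k)`!.
  have -> : n - m = n - k - (m - k) by lia.
  by apply: bin_fact; lia.
rewrite [LHS](_ : _ = 'C(n, k) * (k`! * ('C(n - k, m - k) * ((m - k)`! * (n - m)`!))));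
  last by lia.
rewrite nk_mk bin_fact ?(leq_trans km) // -(bin_fact mn) -(bin_fact km); lia.
Qed.

Lemma leq_addn_maxn_frac g h u a b : g * b <= u * a -> h + u <= b -> g <= a ->
  g + h <= maxn a b.
Proof.
move=> gbua hub ga; case: (leqP a b) => ab.
- suff: g <= u by lia.
  case: (posnP a) => [a0|a_gt0]; first by move: ga; rewrite a0; lia.
  by rewrite -(leq_pmul2r a_gt0); apply: leq_trans gbua; rewrite leq_mul2l ab orbT.
- nia.
Qed.

Lemma sum_nat_of_bool_card (T : finType) (S : {pred T}) (P : pred T) :
  \sum_(x in S) (P x : nat) = #|[set x in S | P x]|.
Proof. by rewrite -big_mkcondr sum1dep_card. Qed.

Lemma card_le_sum_fibers (T : finType) (I : eqType) (F : {set T}) (f : T -> I) (s : seq I) :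
  {in F, forall x, f x \in s} -> #|F| <= \sum_(i <- s) #|[set x in F | f x == i]|.
Proof.
move=> Ff; rewrite -sum1_card.
under [X in _ <= X]eq_bigr do rewrite -sum_nat_of_bool_card.
rewrite exchange_big /=; apply: leq_sum => x Fx.
rewrite -big_mkcond sum1_count /= -has_count; apply/hasP; exists (f x) => //; exact: Ff.
Qed.

Section TwoLevels.
Variable n : nat.
Implicit Types (A B : {set 'I_n}) (G H : {set {set 'I_n}}).

Lemma card_supsets A m : #|A| <= m <= n ->
  #|[set B : {set 'I_n} | A \subset B & #|B| == m]| = 'C(n - #|A|, m - #|A|).
Proof.
case/andP=> Am mn; have cardAC : #|~: A| = n - #|A| by rewrite cardsCs card_ord setCK.
have -> : [set B : {set 'I_n} | A \subset B & #|B| == m] =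
          @setC _ @: [set C : {set 'I_n} | C \subset ~: A & #|C| == n - m].
  apply/setP => B; rewrite -[X in _ = (X \in _)]setCK (mem_imset _ _ (@setC_inj _)) !inE.
  rewrite setCS; congr (_ && _); have := cardsC B; rewrite card_ord.
  by move=> cardB; apply/eqP/eqP; lia.
rewrite (card_imset _ (@setC_inj _)) cards_draws cardAC -bin_sub; last by lia.
by congr 'C(_, _); lia.
Qed.

Lemma card_uniform_family m G : {in G, forall A, #|A| = m} -> #|G| <= 'C(n, m).
Proof.
move=> G_m; rewrite -[n in 'C(n, _)]card_ord -card_draws.
by apply/subset_leq_card/subsetP => A GA; rewrite inE G_m.
Qed.

Definition upper_shadow m G := [set B : {set 'I_n} | #|B| == m & [exists A in G, A \subset B]].

Lemma normalized_matching k m G : k <= m -> {in G, forall A, #|A| = k} ->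
  #|G| * 'C(n, m) <= #|upper_shadow m G| * 'C(n, k).
Proof.
move=> km G_k; have [mn | nm] := leqP m n; last by rewrite bin_small ?muln0.
set U := upper_shadow m G.
have up_count : \sum_(A in G) \sum_(B in U) (A \subset B : nat) = #|G| * 'C(n - k, m - k).
  rewrite -sum_nat_const; apply: eq_bigr => A GA.
  rewrite sum_nat_of_bool_card -(G_k A GA) -card_supsets ?G_k ?km //.
  apply: eq_card => B; rewrite !inE andbC; apply: andb_id2l => AB.
  by rewrite andb_idr // => _; apply/existsP; exists A; rewrite GA.
have down_count : \sum_(B in U) \sum_(A in G) (A \subset B : nat) <= #|U| * 'C(m, k).
  rewrite -sum_nat_const; apply: leq_sum => B; rewrite inE => /andP[/eqP <- _].
  rewrite sum_nat_of_bool_card -cards_draws.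
  by apply/subset_leq_card/subsetP => A; rewrite !inE => /andP[GA ->]; rewrite (G_k A GA) eqxx.
have pairs : #|G| * 'C(n - k, m - k) <= #|U| * 'C(m, k).
  by rewrite -up_count exchange_big.
rewrite -(leq_pmul2r (_ : 0 < 'C(m, k))) ?bin_gt0 // -mulnA -mul_bin_subset //.
by rewrite mulnCA -[X in _ <= X]mulnA [X in _ <= X]mulnCA leq_mul2l pairs orbT.
Qed.

Lemma card_antichain_two_levels k m G H : k <= m ->
  {in G, forall A, #|A| = k} -> {in H, forall B, #|B| = m} ->
  {in G & H, forall A B : {set 'I_n}, ~~ (A \subset B)} ->
  #|G| + #|H| <= maxn 'C(n, k) 'C(n, m).
Proof.
move=> km G_k H_m GH_anti.
apply: (leq_addn_maxn_frac (normalized_matching km G_k) _ (card_uniform_family G_k)).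
rewrite -cardsUI; have -> : H :&: upper_shadow m G = set0.
  apply/setP => B; rewrite !inE; apply/andP => -[HB /andP[_ /existsP[A /andP[GA AB]]]].
  by move: (GH_anti A B GA HB); rewrite AB.
by rewrite cards0 addn0; apply: card_uniform_family => B; rewrite !inE => /orP[/H_m|/andP[/eqP]].
Qed.

End TwoLevels.

Lemma leq_last_sorted (s : seq nat) k : sorted ltn s -> k \in s -> k <= last 0 s.
Proof.
case/lastP: s => [//|s x]; rewrite last_rcons mem_rcons inE -rev_sorted rev_rcons /=.
move=> /(order_path_min (fun y x z (yx : y < x) (zy : z < y) => ltn_trans zy yx)).
by move=> /allP lt_x /orP[/eqP->//|k_s]; apply/ltnW/lt_x; rewrite mem_rev.
Qed.

Lemma modn_cases_lt2 x p k : x %% p = k -> x < k + 2 * p -> x = k \/ x = k + p.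
Proof.
move=> xk x_lt; have := divn_eq x p; rewrite xk.
by case: (x %/ p) => [|[|q]] /=; nia.
Qed.

Lemma size_disjoint_below p (K L : seq nat) : uniq K -> uniq L ->
  all (fun k => k < p) K -> all (fun l => l < p) L -> all (fun l => l \notin K) L ->
  size L + size K <= p.
Proof.
move=> K_uniq L_uniq /allP K_p /allP L_p /allP LK.
rewrite -size_cat -(size_iota 0 p) uniq_leq_size //.
  rewrite cat_uniq L_uniq K_uniq andbT; apply/hasPn => k Kk.
  by apply/negP => /LK; rewrite Kk.
by move=> x; rewrite mem_cat mem_iota add0n => /orP[/L_p | /K_p].
Qed.

Lemma card_residue_class_le n p k s (F : {set {set 'I_n}}) :
  k <= s < p -> k + s <= n <= k + s + p ->
  {in F &, forall A B, A != B -> #|A :&: B| %% p != k} ->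
  #|[set A in F | #|A| %% p == k]| <= 'C(n, s).
Proof.
move=> /andP[ks sp] /andP[ksn nksp] F_meet.
set Fk := [set A in F | #|A| %% p == k].
pose G := [set A in Fk | #|A| == k]; pose H := [set A in Fk | #|A| == k + p].
have Fk_GH : #|Fk| <= #|G| + #|H|.
  rewrite -cardsUI (leq_trans _ (leq_addr _ _)) // subset_leq_card //.
  apply/subsetP => A; rewrite !inE => /andP[-> /eqP A_mod] /=.
  have A_lt : #|A| < k + 2 * p.
    by apply: leq_ltn_trans (_ : n < _); [rewrite -[X in _ <= X]card_ord max_card | lia].
  by case: (modn_cases_lt2 A_mod A_lt) => A_eq; rewrite A_mod A_eq !eqxx ?orbT.
have GH_anti : {in G & H, forall A B : {set 'I_n}, ~~ (A \subset B)}.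
  move=> A B; rewrite !inE => /andP[/andP[FA _] /eqP A_k] /andP[/andP[FB _] /eqP B_kp].
  apply/negP => AB; have AneB : A != B by apply/eqP => AB_eq; move: A_k; rewrite AB_eq; lia.
  by move: (F_meet A B FA FB AneB); rewrite (setIidPl AB) A_k modn_small ?eqxx //; lia.
apply: leq_trans Fk_GH _.
apply: leq_trans (card_antichain_two_levels (leq_addr p k) _ _ GH_anti) _.
- by move=> A; rewrite inE => /andP[_ /eqP].
- by move=> A; rewrite inE => /andP[_ /eqP].
rewrite geq_max leq_bin_mid //=; last by lia.
have [kpn | nkp] := leqP (k + p) n; last by rewrite bin_small.
by rewrite -(bin_sub kpn) leq_bin_mid //; lia.
Qed.

Theorem mainTheorem8 (p n : nat) (K L : seq nat) (F : {set {set 'I_n}}) :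
  prime p ->
  0 < size K ->
  sorted ltn K ->
  all (fun k => k < p) K ->
  uniq L ->
  all (fun l => l < p) L ->
  all (fun l => l \notin K) L ->
  (forall A, A \in F -> (#|A| %% p) \in K) ->
  (forall A B, A \in F -> B \in F -> A != B -> (#|A :&: B| %% p) \in L) ->
  size L + last 0 K <= n ->
  n + 2 * size K <= 2 * size L ->
  p + head 0 K + 2 * size K <= size L + 2 + last 0 K ->
  [/\ #|F| <= size K * 'C(n, size L),
      size K * 'C(n, size L) <= \sum_(i < size K) 'C(n, size L - 2 * i)
    & \sum_(i < size K) 'C(n, size L - 2 * i)
        = \sum_(j < 2 * size K) 'C(n.-1, size L - j)].
Proof.
move=> _ r_gt0 K_sorted K_p L_uniq L_p LK F_K F_L sk_n n_2s _.
have sr_p := size_disjoint_below (sorted_uniq ltn_trans ltnn K_sorted) L_uniq K_p L_p LK.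
split.
- apply: leq_trans (card_le_sum_fibers F_K) _.
  rewrite -sum1_size big_distrl big_seq [X in _ <= X]big_seq /=; apply: leq_sum => k Kk.
  have k_last := leq_last_sorted K_sorted Kk.
  rewrite mul1n card_residue_class_le //; try (apply/andP; split); try lia.
  move=> A B FA FB AneB; apply: contraTneq (F_L A B FA FB AneB) => ->.
  by apply/negP => /(allP LK); rewrite Kk.
- rewrite -{1}(card_ord (size K)) -sum_nat_const; apply: leq_sum => i _.
  by rewrite -(@bin_sub n (size L)) ?leq_bin_mid //; have := ltn_ord i; lia.
- by apply: sum_bin_skip2; lia.
Qed.
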